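(* For every $*$-term of the form $P\land^\circ Q$ (with $P$ a $*$-term and $Q\in P^d$), the tree $se(P\land^\circ Q)$ has no candidate disjunction decomposition. For every $*$-term of the form $P\lor^\circ Q$ (with $P$ a $*$-term and $Q\in P^c$), the tree $se(P\lor^\circ Q)$ has no candidate conjunction decomposition.
   Context: Let $A$ be a nonempty set of atoms; terms are closed terms over constants $\mathsf T,\mathsf F$, atoms $a\in A$, unary $\neg$, binary $\land^\circ$, $\lor^\circ$. Evaluation trees $\mathcal T_A$: $\mathsf T,\mathsf F\in\mathcal T_A$ and $(X\unlhd a\unrhd Y)\in\mathcal T_A$ for $X,Y\in\mathcal T_A$, $a\in A$. $\mathcal T_{A,\triangle}$: the same with leaves in $\{\mathsf T,\mathsf F,\triangle\}$. Leaf replacement $X[\ell_1\mapsto Y_1,\ldots]$ replaces every leaf labelled $\ell_i$ by $Y_i$. $se$: $se(\mathsf T)=\mathsf T$, $se(\mathsf F)=\mathsf F$, $se(a)=\mathsf T\unlhd a\unrhd\mathsf F$, $se(\neg P)=se(P)[\mathsf T\mapsto\mathsf F,\mathsf F\mapsto\mathsf T]$, $se(P\land^\circ Q)=se(P)[\mathsf T\mapsto se(Q)]$, $se(P\lor^\circ Q)=se(P)[\mathsf F\mapsto se(Q)]$. Syntactic categories ($a\in A$): $\mathsf T$-terms $P^{\mathsf T}::=\mathsf T\mid(a\land^\circ P^{\mathsf T})\lor^\circ P^{\mathsf T}$; $\mathsf F$-terms $P^{\mathsf F}::=\mathsf F\mid(a\lor^\circ P^{\mathsf F})\land^\circ P^{\mathsf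 F}$; $\ell$-terms $P^\ell::=(a\land^\circ P^{\mathsf T})\lor^\circ P^{\mathsf F}\mid(\neg a\land^\circ P^{\mathsf T})\lor^\circ P^{\mathsf F}$; $*$-terms $P^*::=P^c\mid P^d$, $P^c::=P^\ell\mid P^*\land^\circ P^d$, $P^d::=P^\ell\mid P^*\lor^\circ P^c$. A pair $(Y,Z)\in\mathcal T_{A,\triangle}\times\mathcal T_A$ is a candidate conjunction decomposition (ccd) of $X\in\mathcal T_A$ if $X=Y[\triangle\mapsto Z]$, $Y$ contains $\triangle$, $Y$ contains $\mathsf F$ but not $\mathsf T$, and $Z$ contains both $\mathsf T$ and $\mathsf F$. It is a candidate disjunction decomposition (cdd) of $X$ if $X=Y[\triangle\mapsto Z]$, $Y$ contains $\triangle$, $Y$ contains $\mathsf T$ but not $\mathsf F$, and $Z$ contains both $\mathsf T$ and $\mathsf F$ (''contains'' refers to leaf labels). *)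

Set Implicit Arguments.

Inductive term (A : Type) : Type :=
| TT : term A
| FF : term A
| Atom : A -> term A
| Neg : term A -> term A
| AndS : term A -> term A -> term A
| OrS : term A -> term A -> term A.

Arguments TT {A}.
Arguments FF {A}.

(* Evaluation trees with leaves of type L; Node X a Y stands for X ⊴ a ⊵ Y
   (X is the branch taken when a evaluates to true). *)
Inductive etree (A L : Type) : Type :=
| Leaf : L -> etree A L
| Node : etree A L -> A -> etree A L -> etree A L.

Inductive lab2 : Type := lT | lF.
Inductive lab3 : Type := tT | tF | tTri.

Definition tree (A : Type) := etree A lab2.
Definition tree3 (A : Type) := etree A lab3.

Fixpoint lrepl (A L L' : Type) (X : etree A L) (f : L -> etree A L') : etree A L' :=
  match X with
  | Leaf _ l => f l
  | Node X1 a X2 => Node (lrepl X1 f) a (lrepl X2 f)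
  end.

Fixpoint se (A : Type) (P : term A) : tree A :=
  match P with
  | TT => Leaf A lT
  | FF => Leaf A lF
  | Atom a => Node (Leaf A lT) a (Leaf A lF)
  | Neg P1 => lrepl (se P1) (fun l => match l with lT => Leaf A lF | lF => Leaf A lT end)
  | AndS P1 Q1 => lrepl (se P1) (fun l => match l with lT => se Q1 | lF => Leaf A lF end)
  | OrS P1 Q1 => lrepl (se P1) (fun l => match l with lT => Leaf A lT | lF => se Q1 end)
  end.

Fixpoint contains (A L : Type) (X : etree A L) (l : L) : Prop :=
  match X with
  | Leaf _ l' => l' = l
  | Node X1 _ X2 => contains X1 l \/ contains X2 l
  end.

Definition repl_tri (A : Type) (Y : tree3 A) (Z : tree A) : tree A :=
  lrepl Y (fun l => match l with tT => Leaf A lT | tF => Leaf A lF | tTri => Z end).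

Inductive isT (A : Type) : term A -> Prop :=
| isT_T : isT TT
| isT_or : forall (a : A) P Q, isT P -> isT Q -> isT (OrS (AndS (Atom a) P) Q).

Inductive isF (A : Type) : term A -> Prop :=
| isF_F : isF FF
| isF_and : forall (a : A) P Q, isF P -> isF Q -> isF (AndS (OrS (Atom a) P) Q).

Inductive isL (A : Type) : term A -> Prop :=
| isL_pos : forall (a : A) P Q, isT P -> isF Q -> isL (OrS (AndS (Atom a) P) Q)
| isL_neg : forall (a : A) P Q, isT P -> isF Q -> isL (OrS (AndS (Neg (Atom a)) P) Q).

Inductive isStar (A : Type) : term A -> Prop :=
| isStar_c : forall P, isC P -> isStar P
| isStar_d : forall P, isD P -> isStar P
with isC (A : Type) : term A -> Prop :=
| isC_l : forall P, isL P -> isC P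
| isC_and : forall P Q, isStar P -> isD Q -> isC (AndS P Q)
with isD (A : Type) : term A -> Prop :=
| isD_l : forall P, isL P -> isD P
| isD_or : forall P Q, isStar P -> isC Q -> isD (OrS P Q).

Definition ccd (A : Type) (X : tree A) (Y : tree3 A) (Z : tree A) : Prop :=
  X = repl_tri Y Z /\ contains Y tTri /\ contains Y tF /\ ~ contains Y tT
  /\ contains Z lT /\ contains Z lF.

Definition cdd (A : Type) (X : tree A) (Y : tree3 A) (Z : tree A) : Prop :=
  X = repl_tri Y Z /\ contains Y tTri /\ contains Y tT /\ ~ contains Y tF
  /\ contains Z lT /\ contains Z lF.

From Stdlib Require Import Lia.

(* Suppose X = S[T |-> R] = Y[tri |-> Z] with Y free of F, where S and R both
   contain F.  Following a path of S to an F leaf, Y must reach its tri leaf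
   first, so Z is a subtree S'[T |-> R] of X; as Z contains T, it contains a
   copy of R, whence |R| <= |Z|.  Following a path of Y to a T leaf, S must end
   first, at a T leaf, so the R hanging there is Y'[tri |-> Z] for the subtree
   Y' of Y at that node; as R contains F, Y' contains tri besides T, so Z is a
   proper subtree of R and |Z| < |R|.  Taking S = se P and R = se Q rules out
   a cdd of se (P and Q); the disjunctive case is the same argument after
   exchanging T and F. *)

Section Trees.
Context {A : Type}.

Fixpoint tsize {L : Type} (X : etree A L) : nat :=
  match X with Leaf _ _ => 1 | Node X1 _ X2 => S (tsize X1 + tsize X2) end.

Lemma contains_lrepl_iff {L L' : Type} (S : etree A L) (f : L -> etree A L') l :
  contains (lrepl S f) l <-> exists l', contains S l' /\ contains (f l') l.
Proof.
  induction S as [l0 | S1 IH1 a S2 IH2]; simpl.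
  - split; [intros H; exists l0; auto | intros [l' [<- H]]; exact H].
  - rewrite IH1, IH2. firstorder.
Qed.

Lemma contains_lrepl {L L' : Type} {S : etree A L} {f : L -> etree A L'} {l l'} :
  contains S l' -> contains (f l') l -> contains (lrepl S f) l.
Proof. intros H1 H2; apply contains_lrepl_iff; eauto. Qed.

Lemma tsize_lrepl {L L' : Type} {S : etree A L} (f : L -> etree A L') {l} :
  contains S l -> tsize (f l) <= tsize (lrepl S f).
Proof.
  induction S as [l0 | S1 IH1 a S2 IH2]; simpl; intros H.
  - subst; auto.
  - destruct H as [H | H]; [specialize (IH1 H) | specialize (IH2 H)]; lia.
Qed.

Lemma lrepl_ext {L L' : Type} (S : etree A L) (f g : L -> etree A L') :
  (forall l, f l = g l) -> lrepl S f = lrepl S g.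
Proof. intros Efg; induction S; simpl; congruence. Qed.

Lemma lrepl_lrepl {L L' L'' : Type} (S : etree A L) (f : L -> etree A L')
    (g : L' -> etree A L'') :
  lrepl (lrepl S f) g = lrepl S (fun l => lrepl (f l) g).
Proof. induction S; simpl; congruence. Qed.

Definition relabel {L L' : Type} (g : L -> L') (X : etree A L) : etree A L' :=
  lrepl X (fun l => Leaf A (g l)).

Lemma contains_relabel {L L' : Type} (g : L -> L') (X : etree A L) l :
  (forall l1 l2, g l1 = g l2 -> l1 = l2) ->
  contains (relabel g X) (g l) <-> contains X l.
Proof.
  intros g_inj; unfold relabel; rewrite contains_lrepl_iff; simpl.
  split; [intros [l' [H E]]; rewrite <- (g_inj _ _ E); exact H | eauto].
Qed.

Definition seq_and (S R : tree A) : tree A :=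
  lrepl S (fun l => match l with lT => R | lF => Leaf A lF end).

Definition seq_or (S R : tree A) : tree A :=
  lrepl S (fun l => match l with lT => Leaf A lT | lF => R end).

Lemma tsize_seq_and (S R : tree A) :
  contains (seq_and S R) lT -> tsize R <= tsize (seq_and S R).
Proof.
  intros [[|] [HS HT]]%contains_lrepl_iff.
  - exact (tsize_lrepl _ HS).
  - discriminate HT.
Qed.

Lemma tsize_repl_tri_Node {Y1 Y2 : tree3 A} {b} (Z : tree A) :
  contains (Node Y1 b Y2) tTri -> tsize Z < tsize (repl_tri (Node Y1 b Y2) Z).
Proof.
  intros HY; unfold repl_tri; simpl.
  destruct HY as [HY | HY]; pose proof (tsize_lrepl
    (fun l => match l with tT => Leaf A lT | tF => Leaf A lF | tTri => Z end) HY);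
    lia.
Qed.

Lemma tsize_le_seq_and_tri {S R Z : tree A} {Y : tree3 A} :
  repl_tri Y Z = seq_and S R -> ~ contains Y tF -> contains S lF ->
  contains Z lT -> tsize R <= tsize Z.
Proof.
  revert Y; induction S as [l | S1 IH1 a S2 IH2];
    intros [[| |] | Y1 b Y2] HX nYF SF ZT; try (exfalso; apply nYF; reflexivity).
  all: cbn in HX, SF; try subst l; try discriminate HX.
  - rewrite HX in ZT; discriminate ZT.
  - rewrite HX in ZT |- *; exact (tsize_seq_and (Node S1 a S2) R ZT).
  - injection HX as HX1 _ HX2; simpl in nYF.
    destruct SF as [SF | SF]; [apply (IH1 Y1) | apply (IH2 Y2)]; auto.
Qed.

Lemma tsize_lt_seq_and_tri {S R Z : tree A} {Y : tree3 A} :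
  repl_tri Y Z = seq_and S R -> ~ contains Y tF -> contains Y tT ->
  contains R lF -> tsize Z < tsize R.
Proof.
  revert S; induction Y as [l | Y1 IH1 b Y2 IH2];
    intros [[|] | S1 a S2] HX nYF YT RF.
  - simpl in YT; subst l; cbn in HX; subst R; discriminate RF.
  - simpl in YT; subst l; discriminate HX.
  - simpl in YT; subst l; discriminate HX.
  - change (seq_and (Leaf A lT) R) with R in HX; subst R.
    apply contains_lrepl_iff in RF as [[| |] [HY HF]]; try discriminate HF.
    + contradiction.
    + exact (tsize_repl_tri_Node Z HY).
  - discriminate HX.
  - injection HX as HX1 _ HX2; simpl in nYF, YT.
    destruct YT as [YT | YT]; [apply (IH1 S1) | apply (IH2 S2)]; auto.
Qed.

Lemma no_cdd_seq_and {S R Z : tree A} {Y : tree3 A} :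
  contains S lF -> contains R lF -> ~ cdd (seq_and S R) Y Z.
Proof.
  intros SF RF [HX [_ [YT [nYF [ZT _]]]]].
  pose proof (tsize_le_seq_and_tri (eq_sym HX) nYF SF ZT).
  pose proof (tsize_lt_seq_and_tri (eq_sym HX) nYF YT RF).
  lia.
Qed.

Definition swapTF (l : lab2) : lab2 := match l with lT => lF | lF => lT end.

Definition swapTF3 (l : lab3) : lab3 :=
  match l with tT => tF | tF => tT | tTri => tTri end.

Lemma swapTF_inj l1 l2 : swapTF l1 = swapTF l2 -> l1 = l2.
Proof. destruct l1, l2; simpl; congruence. Qed.

Lemma swapTF3_inj l1 l2 : swapTF3 l1 = swapTF3 l2 -> l1 = l2.
Proof. destruct l1, l2; simpl; congruence. Qed.

Lemma relabel_repl_tri (Y : tree3 A) (Z : tree A) :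
  relabel swapTF (repl_tri Y Z) = repl_tri (relabel swapTF3 Y) (relabel swapTF Z).
Proof.
  unfold relabel, repl_tri; rewrite !lrepl_lrepl.
  apply lrepl_ext; intros [| |]; reflexivity.
Qed.

Lemma relabel_seq_or (S R : tree A) :
  relabel swapTF (seq_or S R) = seq_and (relabel swapTF S) (relabel swapTF R).
Proof.
  unfold relabel, seq_or, seq_and; rewrite !lrepl_lrepl.
  apply lrepl_ext; intros [|]; reflexivity.
Qed.

Lemma cdd_relabel_ccd {X Z : tree A} {Y : tree3 A} :
  ccd X Y Z -> cdd (relabel swapTF X) (relabel swapTF3 Y) (relabel swapTF Z).
Proof.
  pose proof (fun (Y : tree3 A) l => contains_relabel swapTF3 Y l swapTF3_inj) as HY.
  pose proof (fun (Z : tree A) l => contains_relabel swapTF Z l swapTF_inj) as HZ.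
  intros [-> [YTri [YF [nYT [ZT ZF]]]]].
  split; [apply relabel_repl_tri |].
  split; [exact (proj2 (HY Y tTri) YTri) |].
  split; [exact (proj2 (HY Y tF) YF) |].
  split; [intros YT; exact (nYT (proj1 (HY Y tT) YT)) |].
  split; [exact (proj2 (HZ Z lF) ZF) | exact (proj2 (HZ Z lT) ZT)].
Qed.

Lemma no_ccd_seq_or {S R Z : tree A} {Y : tree3 A} :
  contains S lT -> contains R lT -> ~ ccd (seq_or S R) Y Z.
Proof.
  intros ST RT HX%cdd_relabel_ccd; rewrite relabel_seq_or in HX.
  revert HX; apply no_cdd_seq_and;
    [exact (proj2 (contains_relabel swapTF S lT swapTF_inj) ST)
    | exact (proj2 (contains_relabel swapTF R lT swapTF_inj) RT)].
Qed.

End Trees.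

Scheme isStar_mut := Induction for isStar Sort Prop
  with isC_mut := Induction for isC Sort Prop
  with isD_mut := Induction for isD Sort Prop.

Section Terms.
Context {A : Type}.

Lemma se_isT_contains_lT {P : term A} : isT P -> contains (se P) lT.
Proof. induction 1; simpl; auto. Qed.

Lemma se_isF_contains_lF {P : term A} : isF P -> contains (se P) lF.
Proof. induction 1; simpl; auto. Qed.

Lemma se_isL_contains_lT_lF (P : term A) :
  isL P -> contains (se P) lT /\ contains (se P) lF.
Proof.
  intros [a P1 Q1 HT HF | a P1 Q1 HT HF]; simpl; split.
  - left; eapply contains_lrepl; [exact (se_isT_contains_lT HT) | reflexivity].
  - right; exact (se_isF_contains_lF HF).
  - right; eapply contains_lrepl; [exact (se_isT_contains_lT HT) | reflexivity].
  - left; exact (se_isF_contains_lF HF).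
Qed.

Lemma se_isStar_contains_lT_lF {P : term A} :
  isStar P -> contains (se P) lT /\ contains (se P) lF.
Proof.
  revert P.
  pose (both (P : term A) := contains (se P) lT /\ contains (se P) lF).
  apply (isStar_mut A (fun P _ => both P) (fun P _ => both P) (fun P _ => both P));
    try (intros; apply se_isL_contains_lT_lF; assumption); auto.
  - intros P Q _ [PT PF] _ [QT _]; split.
    + eapply contains_lrepl; [exact PT | exact QT].
    + eapply contains_lrepl; [exact PF | reflexivity].
  - intros P Q _ [PT PF] _ [_ QF]; split.
    + eapply contains_lrepl; [exact PT | reflexivity].
    + eapply contains_lrepl; [exact PF | exact QF].
Qed.

End Terms.

Theorem lemma3p5 (A : Type) (HA : inhabited A) :
  (forall P Q : term A, isStar P -> isD Q ->
     ~ exists (Y : tree3 A) (Z : tree A), cdd (se (AndS P Q)) Y Z) /\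
  (forall P Q : term A, isStar P -> isC Q ->
     ~ exists (Y : tree3 A) (Z : tree A), ccd (se (OrS P Q)) Y Z).
Proof.
  split; intros P Q HP HQ [Y [Z HX]];
    destruct (se_isStar_contains_lT_lF HP) as [PT PF].
  - destruct (se_isStar_contains_lT_lF (isStar_d HQ)) as [_ QF].
    exact (no_cdd_seq_and PF QF HX).
  - destruct (se_isStar_contains_lT_lF (isStar_c HQ)) as [QT _].
    exact (no_ccd_seq_or PT QT HX).
Qed.
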